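(* Let $f$ be a measurable map preserving a probability measure $\mu$. Let $(U_n)$ and $(V_n)$ be two nested sequences of measurable sets ($U_{n+1}\subset U_n$, $V_{n+1}\subset V_n$) with $V_n\subset U_n$ and $\mu(V_n)>0$ for each $n$, and such that $\mu(U_n\setminus V_n)/\mu(U_n)\to0$ as $n\to\infty$. For $*\in\{U,V\}$ and $\ell\ge1$ put $$\hat\alpha^*_\ell=\lim_{K\to\infty}\lim_{n\to\infty}\mu_{*_n}\big(\tau^{\ell-1}_{*_n}\le K\big).$$ Then $\hat\alpha^U_\ell=\hat\alpha^V_\ell$ for every $\ell\ge1$ (i.e., for each $\ell$ the limits defining $\hat\alpha^U_\ell$ exist if and only if those defining $\hat\alpha^V_\ell$ exist, and then they coincide).
   Context: $\tau_W(x)=\min\{j\ge1:f^jx\in W\}$, $\tau^0_W=0$, $\tau^j_W=\tau^{j-1}_W+\tau_W\circ f^{\tau^{j-1}_W}$; $\mu_W(A)=\mu(A\cap W)/\mu(W)$. *)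

From HB Require Import structures.
From mathcomp Require Import all_boot all_order all_algebra.
From mathcomp Require Import all_classical all_reals all_analysis.
Set Implicit Arguments. Unset Strict Implicit. Unset Printing Implicit Defensive.
Import Order.TTheory GRing.Theory Num.Theory.
Import numFieldNormedType.Exports.
Local Open Scope classical_set_scope.
Local Open Scope ring_scope.

Section Defs.
Context {T : Type}.

(* tau_W(x) = min{ j >= 1 : f^j x \in W }, None when the set is empty (= +oo). *)
Definition tau (f : T -> T) (W : set T) (x : T) : option nat :=
  match pselect (exists j, (0 < j)%N && `[< W (iter j f x) >]) with
  | left h => Some (ex_minn h)
  | right _ => None
  end.

Fixpoint tau_iter (f : T -> T) (W : set T) (j : nat) (x : T) : option nat :=
  match j with
  | 0%N => Some 0%N
  | j'.+1 => match tau_iter f W j' x with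
             | Some t => match tau f W (iter t f x) with
                         | Some s => Some (t + s)%N
                         | None => None
                         end
             | None => None
             end
  end.

Definition tau_iter_le (f : T -> T) (W : set T) (j K : nat) : set T :=
  [set x | exists t, tau_iter f W j x = Some t /\ (t <= K)%N].
End Defs.

Definition condmeas {d} {T : measurableType d} {R : realType}
  (mu : probability T R) (W A : set T) : R :=
  fine (mu (A `&` W)) / fine (mu W).

Definition alpha_hat_is {d} {T : measurableType d} {R : realType}
  (mu : probability T R) (f : T -> T) (W : nat -> set T) (l : nat) (a : R) : Prop :=
  exists g : nat -> R,
    (forall K : nat,
       (fun n => condmeas mu (W n) (tau_iter_le f (W n) l.-1 K)) @ \oo --> g K)
    /\ g @ \oo --> a.

From HB Require Import structures.
From mathcomp Require Import all_boot all_order all_algebra.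
From mathcomp Require Import all_classical all_reals all_analysis.
From mathcomp Require Import ring lra.
Set Implicit Arguments. Unset Strict Implicit. Unset Printing Implicit Defensive.
Import Order.TTheory GRing.Theory Num.Theory.
Import numFieldNormedType.Exports.
Local Open Scope classical_set_scope.
Local Open Scope ring_scope.

(* If the orbit segment x, f x, ..., f^K x avoids D = U \ V, then U and V are
   visited at the same times up to K, so x lies in both or neither of
   U `&` {tau^j_U <= K} and V `&` {tau^j_V <= K}.  By invariance the exceptional
   points have measure at most (K+1) mu(D); normalising by mu(U) and mu(V) costs
   one more mu(D), whence
   |mu_U(tau^j_U <= K) - mu_V(tau^j_V <= K)| <= (K+2) mu(U \ V) / mu(U).
   For fixed K this tends to 0, so the inner limits, hence the double limits,
   coincide. *)

Definition orbit_hits {T : Type} (f : T -> T) (D : set T) (K : nat) : set T :=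
  \bigcup_(i in `I_K.+1) (iter i f @^-1` D).

Section ReturnTimes.
Context {T : Type} (f : T -> T).

Lemma tau_SomeP (W : set T) x s :
  tau f W x = Some s <->
  [/\ (0 < s)%N, W (iter s f x) &
      forall i, (0 < i < s)%N -> ~ W (iter i f x)].
Proof.
rewrite /tau; case: pselect => [h|h].
- case: ex_minnP => m /andP[m0 /asboolP Wm] m_min; split.
  + case=> <-; split=> // i /andP[i0 lt_im] Wi.
    by have := m_min i; rewrite i0 leqNgt lt_im => /(_ (asboolT Wi)).
  + case=> s0 Ws s_min; congr Some; apply/eqP; rewrite eqn_leq.
    rewrite m_min ?s0 /=; last exact/asboolP.
    rewrite leqNgt; apply/negP => lt_ms.
    by apply: (s_min m) Wm; rewrite m0.
- split=> // -[s0 Ws _]; exfalso; apply: h; exists s.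
  by rewrite s0; exact/asboolP.
Qed.

Lemma tau_agree (W W' : set T) x s :
  (forall i, (0 < i <= s)%N -> (W (iter i f x) <-> W' (iter i f x))) ->
  tau f W x = Some s -> tau f W' x = Some s.
Proof.
move=> agree /tau_SomeP[s0 Ws s_min]; apply/tau_SomeP; split=> //.
- by apply/agree => //; rewrite s0 leqnn.
- move=> i /andP[i0 lt_is] W'i; apply: (s_min i); first by rewrite i0.
  by apply/agree => //; rewrite i0 ltnW.
Qed.

Lemma tau_iter_agree (W W' : set T) x K :
  (forall i, (0 < i <= K)%N -> (W (iter i f x) <-> W' (iter i f x))) ->
  forall j t, (t <= K)%N -> tau_iter f W j x = Some t ->
  tau_iter f W' j x = Some t.
Proof.
move=> agree; elim=> [//|j IH] t tK /=.
case Ej: (tau_iter f W j x) => [t0|] //.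
case Etau: (tau f W (iter t0 f x)) => [s|] // [t_eq].
have t0K : (t0 <= K)%N by rewrite -t_eq in tK; exact: leq_trans (leq_addr _ _) tK.
rewrite (IH _ t0K Ej) (@tau_agree W W' _ s) ?t_eq // => i /andP[i0 i_s].
rewrite -iterD; apply: agree; rewrite addn_gt0 i0 /=.
by apply: leq_trans tK; rewrite -t_eq addnC leq_add2l.
Qed.

Lemma tau_iter_le_setI_sub (W W' D : set T) j K :
  (forall y, ~ D y -> (W y <-> W' y)) ->
  tau_iter_le f W j K `&` W `<=` (tau_iter_le f W' j K `&` W') `|` orbit_hits f D K.
Proof.
move=> agree x [[t [Et tK]] Wx].
have [hit|nohit] := pselect (orbit_hits f D K x); [by right|left].
have agreeK i : (i <= K)%N -> W (iter i f x) <-> W' (iter i f x).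
  by move=> iK; apply: agree => Di; apply: nohit; exists i.
split; last exact/(agreeK 0%N).
exists t; split=> //; apply: (tau_iter_agree _ tK Et) => i /andP[_].
exact: agreeK.
Qed.

End ReturnTimes.

Section Measurability.
Context d (T : measurableType d) (f : T -> T).
Hypothesis f_meas : measurable_fun setT f.

Lemma measurable_fun_iter n : measurable_fun setT (iter n f).
Proof. by elim: n => [|n IH]; [exact: measurable_id | exact: measurableT_comp]. Qed.

Lemma measurable_preimage_iter n (A : set T) :
  measurable A -> measurable (iter n f @^-1` A).
Proof. by move=> mA; rewrite -[_ @^-1` _]setTI; exact: measurable_fun_iter. Qed.

Lemma measurable_orbit_hits (D : set T) K :
  measurable D -> measurable (orbit_hits f D K).
Proof.
by move=> mD; apply: bigcup_measurable => i _; exact: measurable_preimage_iter.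
Qed.

Variable W : set T.
Hypothesis W_meas : measurable W.

Lemma measurable_tau_eq s : measurable [set x | tau f W x = Some s].
Proof.
case: s => [|s].
  rewrite (_ : [set x | _] = set0) //; apply/seteqP; split=> x //=.
  by case/tau_SomeP.
have -> : [set x | tau f W x = Some s.+1] =
    iter s.+1 f @^-1` W `\`
    \bigcup_(i in [set i | (0 < i <= s)%N]) iter i f @^-1` W.
  apply/seteqP; split=> x /=.
    by case/tau_SomeP=> _ Ws s_min; split=> // -[i /= i_s]; exact: s_min.
  case=> Ws s_min; apply/tau_SomeP; split=> // i i_s Wi.
  by apply: s_min; exists i.
apply: measurableD; first exact: measurable_preimage_iter.
by apply: bigcup_measurable => i _; exact: measurable_preimage_iter.
Qed.

Lemma measurable_tau_iter_eq j t : measurable [set x | tau_iter f W j x = Some t].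
Proof.
elim: j t => [|j IH] t /=.
  case: t => [|t]; first by rewrite [X in measurable X](_ : _ = setT) // predeqE.
  by rewrite [X in measurable X](_ : _ = set0) // predeqE.
have -> : [set x | tau_iter f W j.+1 x = Some t] =
    \bigcup_t0 ([set x | tau_iter f W j x = Some t0] `&`
                iter t0 f @^-1` [set y | tau f W y = Some (t - t0)%N]).
  apply/seteqP; split=> x /=.
    case Ej: (tau_iter f W j x) => [t0|] //.
    case Etau: (tau f W (iter t0 f x)) => [s|] // [<-].
    by exists t0 => //; rewrite addKn.
  case=> t0 _ [/= -> Etau]; rewrite Etau subnKC //.
  by case/tau_SomeP: Etau; rewrite subn_gt0 => /ltnW.
apply: bigcupT_measurable => t0; apply: measurableI; first exact: IH.
exact/measurable_preimage_iter/measurable_tau_eq.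
Qed.

Lemma measurable_tau_iter_le j K : measurable (tau_iter_le f W j K).
Proof.
have -> : tau_iter_le f W j K =
    \bigcup_(t in [set t | (t <= K)%N]) [set x | tau_iter f W j x = Some t].
  by apply/seteqP; split=> x /= [t]; [case=> Et tK | move=> tK Et]; exists t.
by apply: bigcup_measurable => t _; exact: measurable_tau_iter_eq.
Qed.

End Measurability.

Section FiniteMeasure.
Context d (T : measurableType d) (R : realType).
Variable mu : {finite_measure set T -> \bar R}.

Lemma fine_measure_le (A B : set T) : measurable A -> measurable B -> A `<=` B ->
  fine (mu A) <= fine (mu B).
Proof.
move=> mA mB AB; apply: fine_le; rewrite ?fin_num_measure //.
exact: le_measure (mem_set mA) (mem_set mB) AB.
Qed.

Lemma fine_measure_le_setU (A B C : set T) :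
  measurable A -> measurable B -> measurable C -> A `<=` B `|` C ->
  fine (mu A) <= fine (mu B) + fine (mu C).
Proof.
move=> mA mB mC ABC; rewrite -fineD ?fin_num_measure //.
have mBC := measurableU _ _ mB mC.
apply: le_trans (fine_measure_le mA mBC ABC) _.
by apply: fine_le; rewrite ?fin_numD ?fin_num_measure //; exact: measureU2.
Qed.

Lemma dist_fine_measure_le (A B C : set T) :
  measurable A -> measurable B -> measurable C ->
  A `<=` B `|` C -> B `<=` A `|` C ->
  `|fine (mu A) - fine (mu B)| <= fine (mu C).
Proof.
move=> mA mB mC ABC BAC; rewrite ler_distl.
have := fine_measure_le_setU mA mB mC ABC.
have := fine_measure_le_setU mB mA mC BAC.
lra.
Qed.

Lemma fine_measureD (U V : set T) : measurable U -> measurable V -> V `<=` U ->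
  fine (mu (U `\` V)) = fine (mu U) - fine (mu V).
Proof.
move=> mU mV VU; rewrite (measureDI mu mU mV) setIidr // fineD ?fin_num_measure //.
  by rewrite addrK.
exact: measurableD.
Qed.

End FiniteMeasure.

Section InvariantMeasure.
Context d (T : measurableType d) (R : realType).
Variables (mu : {finite_measure set T -> \bar R}) (f : T -> T).
Hypotheses (f_meas : measurable_fun setT f)
  (f_pres : forall A : set T, measurable A -> mu (f @^-1` A) = mu A).

Lemma measure_preimage_iter n (A : set T) :
  measurable A -> mu (iter n f @^-1` A) = mu A.
Proof.
elim: n A => [//|n IH] A mA /=.
have mfA : measurable (f @^-1` A) := measurable_preimage_iter f_meas 1 mA.
by rewrite -(f_pres mA) -(IH _ mfA).
Qed.

Lemma fine_measure_orbit_hits_le (D : set T) K :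
  measurable D -> fine (mu (orbit_hits f D K)) <= K.+1%:R * fine (mu D).
Proof.
move=> mD.
have sum_eq : \sum_(i < K.+1) mu (iter i f @^-1` D) = (fine (mu D) *+ K.+1)%:E.
  rewrite (eq_bigr (fun=> mu D)) => [|i _]; last exact: measure_preimage_iter.
  by rewrite sumr_const card_ord EFin_natmul fineK ?fin_num_measure.
have hits_le : (mu (orbit_hits f D K) <= (fine (mu D) *+ K.+1)%:E)%E.
  rewrite -sum_eq.
  apply: (@content_subadditive _ _ _ mu _ (fun i => iter i f @^-1` D)) => [i _||].
  - exact: measurable_preimage_iter.
  - exact: measurable_orbit_hits.
  - by rewrite /orbit_hits bigcup_mkord.
rewrite mulr_natl; apply: (le_trans (fine_le _ _ hits_le)) => //.
by rewrite fin_num_measure //; exact: measurable_orbit_hits.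
Qed.

End InvariantMeasure.

Lemma dist_divr_le (R : realFieldType) (p q u v : R) :
  0 < v -> v <= u -> 0 <= q <= v -> `|p / u - q / v| <= (`|p - q| + (u - v)) / u.
Proof.
move=> v0 vu /andP[q0 qv]; have u0 : 0 < u := lt_le_trans v0 vu.
have -> : p / u - q / v = (p - q) / u - (q / v) * ((u - v) / u).
  by field; rewrite !gt_eqF.
have qv_le1 : q / v <= 1 by rewrite ler_pdivrMr // mul1r.
have c0 : 0 <= (u - v) / u by rewrite divr_ge0 ?subr_ge0 // ltW.
apply: (le_trans (ler_normB _ _)); rewrite [X in _ <= X]mulrDl lerD //.
  by rewrite normrM normfV (gtr0_norm u0).
by rewrite ger0_norm ?ler_piMl // mulr_ge0 // divr_ge0 // ltW.
Qed.

Lemma norm_le_mul_cvg0 (R : realFieldType) {T : Type} (F : set_system T)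
    {FF : Filter F} (u e : T -> R) (C : R) :
  (forall t, `|u t| <= C * e t) -> e @ F --> 0 -> u @ F --> 0.
Proof.
move=> ule e0; apply: norm_cvg0.
apply: (@squeeze_cvgr _ _ _ _ (cst 0) (fun t => C * e t)).
- by apply: nearW => t; rewrite normr_ge0 ule.
- exact: cvg_cst.
- by rewrite -(mulr0 C); exact: cvgMr.
Qed.

Section ConditionalReturnTimes.
Context d (T : measurableType d) (R : realType).
Variables (mu : probability T R) (f : T -> T).
Hypotheses (f_meas : measurable_fun setT f)
  (f_pres : forall A : set T, measurable A -> mu (f @^-1` A) = mu A).

Lemma condmeas_tau_iter_le_dist (U V : set T) j K :
  measurable U -> measurable V -> V `<=` U -> (0 < mu V)%E ->
  `|condmeas mu U (tau_iter_le f U j K) - condmeas mu V (tau_iter_le f V j K)|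
    <= (K%:R + 2) * (fine (mu (U `\` V)) / fine (mu U)).
Proof.
move=> mU mV VU V_pos; set D := U `\` V.
have mD : measurable D := measurableD mU mV.
have agree y : ~ D y -> (U y <-> V y).
  by move=> Dy; split=> [Uy|/VU //]; apply: contrapT => Vy; apply: Dy.
have agree' y (nDy : ~ D y) : V y <-> U y := iff_sym (agree y nDy).
have mAU := measurableI _ _ (measurable_tau_iter_le f_meas mU j K) mU.
have mAV := measurableI _ _ (measurable_tau_iter_le f_meas mV j K) mV.
have mE := measurable_orbit_hits f_meas K mD.
have dist_pq := dist_fine_measure_le mu mAU mAV mE
  (tau_iter_le_setI_sub agree) (tau_iter_le_setI_sub agree').
have hits_le := fine_measure_orbit_hits_le f_meas f_pres K mD.
have v0 : 0 < fine (mu V) by rewrite -lte_fin fineK ?fin_num_measure.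
have vu : fine (mu V) <= fine (mu U) := fine_measure_le mu mV mU VU.
have q_bounds : 0 <= fine (mu (tau_iter_le f V j K `&` V)) <= fine (mu V).
  by rewrite fine_ge0 ?measure_ge0 //= fine_measure_le // subIsetr.
rewrite /condmeas; apply: (le_trans (dist_divr_le _ v0 vu q_bounds)).
rewrite -(fine_measureD mu mU mV VU) -/D mulrA.
rewrite ler_wpM2r ?invr_ge0 ?fine_ge0 ?measure_ge0 //.
by rewrite -natr1 mulrDl mul1r in hits_le; rewrite !mulrDl; lra.
Qed.

End ConditionalReturnTimes.

Lemma alpha_hat_is_sub0 d (T : measurableType d) (R : realType)
    (mu : probability T R) (f : T -> T) (W W' : nat -> set T) l a :
  (forall K, (fun n => condmeas mu (W' n) (tau_iter_le f (W' n) l.-1 K)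
                     - condmeas mu (W n) (tau_iter_le f (W n) l.-1 K))
             @ \oo --> 0) ->
  alpha_hat_is mu f W l a -> alpha_hat_is mu f W' l a.
Proof.
move=> close [g [inner outer]]; exists g; split=> // K.
exact: cvg_sub0 (close K) (inner K).
Qed.

Theorem lemma5p5 (d : measure_display) (T : measurableType d) (R : realType)
  (mu : probability T R) (f : T -> T)
  (f_meas : measurable_fun setT f)
  (f_pres : forall A : set T, measurable A -> mu (f @^-1` A) = mu A)
  (U V : nat -> set T)
  (U_meas : forall n, measurable (U n)) (V_meas : forall n, measurable (V n))
  (U_nest : forall n, U n.+1 `<=` U n) (V_nest : forall n, V n.+1 `<=` V n)
  (VU : forall n, V n `<=` U n)
  (V_pos : forall n, (0 < mu (V n))%E)
  (small : (fun n => fine (mu (U n `\` V n)) / fine (mu (U n))) @ \oo --> 0) :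
  forall (l : nat), (1 <= l)%N ->
  forall a : R, alpha_hat_is mu f U l a <-> alpha_hat_is mu f V l a.
Proof.
move=> l _ a.
have dist K n := condmeas_tau_iter_le_dist f_meas f_pres l.-1 K
  (U_meas n) (V_meas n) (VU n) (V_pos n).
split; apply: alpha_hat_is_sub0 => K; apply: (norm_le_mul_cvg0 _ small) => n.
- by rewrite distrC; exact: dist.
- exact: dist.
Qed.
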